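(* Let $\mathcal{X}\subseteq\mathbb{R}^{d_X}$, $\mathcal{Z}\subseteq\mathbb{R}^{d_Z}$, and let $\Theta=\Gamma\times\Delta\subseteq\mathbb{R}^{d_\gamma+d_\delta}$ be compact and non-empty. Let $X_1,\ldots,X_n$ and $Z_1,\ldots,Z_n$ be independent and identically distributed random vectors with the same distributions as random vectors $X$ (values in $\mathcal{X}$) and $Z$ (values in $\mathcal{Z}$), respectively. Let $G:\mathcal{Z}\times\Gamma\to\mathcal{X}$ and $D:\mathcal{X}\times\Delta\to(0,1)$ be functions, and define $F(x,z,\gamma,\delta)=\ln(D(x,\delta))+\ln(1-D(G(z,\gamma),\delta))$; assume $F(X,Z,\gamma,\delta)$ is measurable for every $(\gamma,\delta)\in\Theta$ and, with probability one, continuous in $(\gamma,\delta)$ on $\Theta$. Define $f(\gamma,\delta)=\mathbb{E}[F(X,Z,\gamma,\delta)]$, $\varphi(\gamma)=\sup_{\delta\in\Delta}f(\gamma,\delta)$, $V_0=\inf_{\gamma\in\Gamma}\varphi(\gamma)$, and $\Theta_0=\{(\gamma_0,\delta_0)\in\Theta: f(\gamma_0,\delta_0)=\varphi(\gamma_0)\text{ and }\varphi(\gamma_0)=V_0\}$. Define the sample quantities $\hat f_n(\gamma,\delta)=\frac1n\sum_{i=1}^nF(X_i,Z_i,\gamma,\delta)$, $\hat\varphi_n(\gamma)=\sup_{\delta\in\Delta}\hat f_n(\gamma,\delta)$, $\hat V_n=\inf_{\gamma\in\Gamma}\hat\varphi_n(\gamma)$, $\hat Q_n(\gamma,\delta)=\max\{\hat\varphi_n(\gamma)-\hat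 f_n(\gamma,\delta),\ \hat\varphi_n(\gamma)-\hat V_n\}$, and for a sequence of random variables $\tau_n$, $\hat\Theta_n(\tau_n)=\{\theta\in\Theta:\hat Q_n(\theta)\le\tau_n\}$. (a) Suppose $\sup_{\theta\in\Theta}|\hat f_n(\theta)-f(\theta)|\to 0$ in probability with $f$ continuous on $\Theta$, and suppose $\tau_n$ is a sequence of non-negative random variables with $\tau_n\to0$ in probability. Then $\sup_{\theta\in\hat\Theta_n(\tau_n)}d(\theta,\Theta_0)\to0$ in probability, and $\hat V_n\to V_0$ in probability. (b) Suppose $\sup_{\theta\in\Theta}|\hat f_n(\theta)-f(\theta)|\to 0$ in probability with $f$ continuous on $\Theta$ and moreover $\sup_{\theta\in\Theta}n^{1/2}|\hat f_n(\theta)-f(\theta)|=O_p(1)$, and suppose $\tau_n$ is a sequence of positive random variables with $\tau_n\to0$ in probability and $n^{-1/2}/\tau_n\to0$ in probability. Then $\sup_{\theta\in\Theta_0}d(\theta,\hat\Theta_n(\tau_n))\to0$ in probability, so that $d_H(\hat\Theta_n(\tau_n),\Theta_0)\to0$ in probability.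
   Context: $|\cdot|$ is the Euclidean norm; for a point $a$ and a set $B$, $d(a,B)=\inf_{b\in B}|a-b|$. For non-empty bounded sets $A,B$ the Hausdorff distance is $d_H(A,B)=\max\{\sup_{a\in A}d(a,B),\sup_{b\in B}d(b,A)\}$. $O_p(1)$ denotes a sequence of random variables bounded in probability. $\Theta_0$ is the set of solutions of the population minimax problem $\inf_{\gamma}\sup_{\delta}f(\gamma,\delta)$ and $\hat\Theta_n(\tau_n)$ the set of $\tau_n$-approximate solutions of the sample problem $\inf_\gamma\sup_\delta\hat f_n(\gamma,\delta)$. *)

From HB Require Import structures.
From mathcomp Require Import all_boot all_order all_algebra.
From mathcomp Require Import all_classical all_reals all_analysis.
Set Implicit Arguments. Unset Strict Implicit. Unset Printing Implicit Defensive.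
Import Order.TTheory GRing.Theory Num.Theory.
Import numFieldNormedType.Exports.
Local Open Scope classical_set_scope.
Local Open Scope ring_scope.

Definition outerP (R : realType) (d : measure_display) (Om : measurableType d)
  (P : probability Om R) (S : set Om) : \bar R :=
  ereal_inf [set P A | A in [set A | measurable A /\ S `<=` A]].

(* Y_n -> 0 in (outer) probability, for extended-real valued Y_n (upper
   deviations; two-sided convergence is expressed by applying it to |Y_n - c|):
   for every eps > 0, P*(Y_n > eps) -> 0. *)
Definition cvg_prob0 (R : realType) (d : measure_display) (Om : measurableType d)
  (P : probability Om R) (Y : nat -> Om -> \bar R) : Prop :=
  forall eps : R, 0 < eps -> forall eta : R, 0 < eta ->
    \forall n \near \oo, (outerP P [set w | (eps%:E < Y n w)%E] < eta%:E)%E.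

Definition bounded_in_prob (R : realType) (d : measure_display) (Om : measurableType d)
  (P : probability Om R) (Y : nat -> Om -> \bar R) : Prop :=
  forall eta : R, 0 < eta -> exists M : R,
    \forall n \near \oo, (outerP P [set w | (M%:E < `|Y n w|)%E] < eta%:E)%E.

(* Borel sigma-algebra on R^n (row vectors), generated by the coordinates. *)
Definition rvec_gen (R : realType) (n : nat) : set (set 'rV[R]_n) :=
  [set B | exists (i : 'I_n) (A : set R),
     measurable A /\ B = (fun v : 'rV[R]_n => v ord0 i) @^-1` A].
Definition rvec_measurable (R : realType) (n : nat) : set (set 'rV[R]_n) :=
  <<s @rvec_gen R n >>.

Definition random_vector (R : realType) (d : measure_display) (Om : measurableType d)
  (n : nat) (X : Om -> 'rV[R]_n) : Prop :=
  forall B, rvec_measurable B -> measurable (X @^-1` B).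

Definition same_law (R : realType) (d : measure_display) (Om : measurableType d)
  (P : probability Om R) (n : nat) (X1 X2 : Om -> 'rV[R]_n) : Prop :=
  forall B, rvec_measurable B -> P (X1 @^-1` B) = P (X2 @^-1` B).

Definition mutually_independent (R : realType) (d : measure_display)
  (Om : measurableType d) (P : probability Om R) (m k : nat)
  (X : nat -> Om -> 'rV[R]_m) (Z : nat -> Om -> 'rV[R]_k) : Prop :=
  forall (I J : seq nat) (A : nat -> set 'rV[R]_m) (B : nat -> set 'rV[R]_k),
    uniq I -> uniq J ->
    (forall i, rvec_measurable (A i)) -> (forall j, rvec_measurable (B j)) ->
    P ((\bigcap_(i in [set` I]) (X i @^-1` A i))
         `&` (\bigcap_(j in [set` J]) (Z j @^-1` B j)))
    = ((\prod_(i <- I) P (X i @^-1` A i)) * (\prod_(j <- J) P (Z j @^-1` B j)))%E.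

Definition eucl_dist (R : realType) (a b : nat) (t u : 'rV[R]_a * 'rV[R]_b) : R :=
  Num.sqrt (\sum_(i < a) (t.1 ord0 i - u.1 ord0 i) ^+ 2
          + \sum_(j < b) (t.2 ord0 j - u.2 ord0 j) ^+ 2).

(* d(t, B) = inf_{u in B} |t - u|  (= +oo if B is empty) *)
Definition dist_set (R : realType) (a b : nat) (t : 'rV[R]_a * 'rV[R]_b)
  (B : set ('rV[R]_a * 'rV[R]_b)) : \bar R :=
  ereal_inf [set (eucl_dist t u)%:E | u in B].

Definition excess (R : realType) (a b : nat) (A B : set ('rV[R]_a * 'rV[R]_b))
  : \bar R := ereal_sup [set dist_set t B | t in A].

Definition hausdorff (R : realType) (a b : nat) (A B : set ('rV[R]_a * 'rV[R]_b))
  : \bar R := maxe (excess A B) (excess B A).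

Definition Fgan (R : realType) (dX dZ dg dd : nat)
  (G : 'rV[R]_dZ -> 'rV[R]_dg -> 'rV[R]_dX) (D : 'rV[R]_dX -> 'rV[R]_dd -> R)
  (x : 'rV[R]_dX) (z : 'rV[R]_dZ) (g : 'rV[R]_dg) (dl : 'rV[R]_dd) : R :=
  ln (D x dl) + ln (1 - D (G z g) dl).

Definition phi0 (R : realType) (dg dd : nat) (f : 'rV[R]_dg * 'rV[R]_dd -> R)
  (Delta : set 'rV[R]_dd) (g : 'rV[R]_dg) : \bar R :=
  ereal_sup [set (f (g, dl))%:E | dl in Delta].

Definition V0 (R : realType) (dg dd : nat) (f : 'rV[R]_dg * 'rV[R]_dd -> R)
  (Gamma : set 'rV[R]_dg) (Delta : set 'rV[R]_dd) : \bar R :=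
  ereal_inf [set phi0 f Delta g | g in Gamma].

Definition Theta0 (R : realType) (dg dd : nat) (f : 'rV[R]_dg * 'rV[R]_dd -> R)
  (Gamma : set 'rV[R]_dg) (Delta : set 'rV[R]_dd) : set ('rV[R]_dg * 'rV[R]_dd) :=
  [set t | (Gamma `*` Delta) t /\ (f t)%:E = phi0 f Delta t.1
                              /\ phi0 f Delta t.1 = V0 f Gamma Delta].

(* sample quantities; the sample is X_0, ..., X_{n-1}, Z_0, ..., Z_{n-1} *)
Definition fhat (R : realType) (Om : Type) (dX dZ dg dd : nat)
  (F : 'rV[R]_dX -> 'rV[R]_dZ -> 'rV[R]_dg -> 'rV[R]_dd -> R)
  (X : nat -> Om -> 'rV[R]_dX) (Z : nat -> Om -> 'rV[R]_dZ)
  (n : nat) (w : Om) (t : 'rV[R]_dg * 'rV[R]_dd) : R :=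
  n%:R^-1 * \sum_(i < n) F (X i w) (Z i w) t.1 t.2.

Definition phihat (R : realType) (Om : Type) (dX dZ dg dd : nat)
  (F : 'rV[R]_dX -> 'rV[R]_dZ -> 'rV[R]_dg -> 'rV[R]_dd -> R)
  (X : nat -> Om -> 'rV[R]_dX) (Z : nat -> Om -> 'rV[R]_dZ)
  (Delta : set 'rV[R]_dd) (n : nat) (w : Om) (g : 'rV[R]_dg) : \bar R :=
  ereal_sup [set (fhat F X Z n w (g, dl))%:E | dl in Delta].

Definition Vhat (R : realType) (Om : Type) (dX dZ dg dd : nat)
  (F : 'rV[R]_dX -> 'rV[R]_dZ -> 'rV[R]_dg -> 'rV[R]_dd -> R)
  (X : nat -> Om -> 'rV[R]_dX) (Z : nat -> Om -> 'rV[R]_dZ)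
  (Gamma : set 'rV[R]_dg) (Delta : set 'rV[R]_dd) (n : nat) (w : Om) : \bar R :=
  ereal_inf [set phihat F X Z Delta n w g | g in Gamma].

Definition Qhat (R : realType) (Om : Type) (dX dZ dg dd : nat)
  (F : 'rV[R]_dX -> 'rV[R]_dZ -> 'rV[R]_dg -> 'rV[R]_dd -> R)
  (X : nat -> Om -> 'rV[R]_dX) (Z : nat -> Om -> 'rV[R]_dZ)
  (Gamma : set 'rV[R]_dg) (Delta : set 'rV[R]_dd) (n : nat) (w : Om)
  (t : 'rV[R]_dg * 'rV[R]_dd) : \bar R :=
  maxe (phihat F X Z Delta n w t.1 - (fhat F X Z n w t)%:E)%E
       (phihat F X Z Delta n w t.1 - Vhat F X Z Gamma Delta n w)%E.

Definition Thetahat (R : realType) (Om : Type) (dX dZ dg dd : nat)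
  (F : 'rV[R]_dX -> 'rV[R]_dZ -> 'rV[R]_dg -> 'rV[R]_dd -> R)
  (X : nat -> Om -> 'rV[R]_dX) (Z : nat -> Om -> 'rV[R]_dZ)
  (Gamma : set 'rV[R]_dg) (Delta : set 'rV[R]_dd) (tau : nat -> Om -> R)
  (n : nat) (w : Om) : set ('rV[R]_dg * 'rV[R]_dd) :=
  [set t | (Gamma `*` Delta) t /\ (Qhat F X Z Gamma Delta n w t <= (tau n w)%:E)%E].

Definition sup_dev (R : realType) (Om : Type) (dX dZ dg dd : nat)
  (F : 'rV[R]_dX -> 'rV[R]_dZ -> 'rV[R]_dg -> 'rV[R]_dd -> R)
  (X : nat -> Om -> 'rV[R]_dX) (Z : nat -> Om -> 'rV[R]_dZ)
  (f : 'rV[R]_dg * 'rV[R]_dd -> R)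
  (Gamma : set 'rV[R]_dg) (Delta : set 'rV[R]_dd) (n : nat) (w : Om) : \bar R :=
  ereal_sup [set (`|fhat F X Z n w t - f t|)%:E | t in Gamma `*` Delta].

From HB Require Import structures.
From mathcomp Require Import all_boot all_order all_algebra.
From mathcomp Require Import all_classical all_reals all_analysis.
From mathcomp Require Import ring lra.
Set Implicit Arguments. Unset Strict Implicit. Unset Printing Implicit Defensive.
Import Order.TTheory GRing.Theory Num.Theory.
Import numFieldNormedType.Exports.
Local Open Scope classical_set_scope.
Local Open Scope ring_scope.

(* On the event sup_Theta |fhat_n - f| <= eta, the minimax quantities of fhat_n
   are within eta of those of f, so the sample criterion Qhat_n is within
   2 eta of its population analogue Q, which vanishes exactly on Theta0.  As f
   is continuous on the compact set Theta, Q is lower semicontinuous, and a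
   small value of Q forces a point to be uniformly close to Theta0; this gives
   (a).  For (b), Theta0 is contained in Thetahat_n(tau_n) as soon as
   2 sup |fhat_n - f| <= tau_n, an event of probability tending to 1 because
   sup |fhat_n - f| / tau_n is an O_p(1) term times an o_p(1) term.
   The sampling hypotheses (laws, independence, measurability, a.s.
   continuity) matter only through the assumed uniform convergence of fhat_n,
   so the proof does not use them. *)
Section OuterProbability.
Variables (R : realType) (d : measure_display) (Om : measurableType d).
Variable P : probability Om R.
Local Open Scope ereal_scope.

Lemma le_outerP (S S' : set Om) : S `<=` S' -> outerP P S <= outerP P S'.
Proof.
move=> SS'; apply: ereal_inf_le_tmp => _ [A [mA S'A] <-].
by exists A => //; split => //; apply: subset_trans S'A.
Qed.

Lemma outerP_setU_lt (S1 S2 : set Om) (a b : R) :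
  outerP P S1 < a%:E -> outerP P S2 < b%:E -> outerP P (S1 `|` S2) < (a + b)%:E.
Proof.
case/ereal_inf_lt => _ [A1 [mA1 SA1] <-] PA1.
case/ereal_inf_lt => _ [A2 [mA2 SA2] <-] PA2.
apply: (@le_lt_trans _ _ (P (A1 `|` A2))).
  by apply: ereal_inf_lbound; exists (A1 `|` A2) => //; split;
    [exact: measurableU | exact: setUSS].
by apply: le_lt_trans (measureU2 _ mA1 mA2) _; rewrite EFinD lteD.
Qed.

Lemma cvg_prob0_dominated (Y Y' : nat -> Om -> \bar R) :
  (forall eps : R, (0 < eps)%R -> exists2 e : R, (0 < e)%R &
     \forall n \near \oo, forall w, Y' n w <= e%:E -> Y n w <= eps%:E) ->
  cvg_prob0 P Y' -> cvg_prob0 P Y.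
Proof.
move=> YY' Y'0 eps eps0 eta eta0; have [e e0 YY'n] := YY' eps eps0.
apply: filterS2 YY'n (Y'0 e e0 eta eta0) => n YY'n.
apply: le_lt_trans; apply: le_outerP => w /=.
by rewrite !ltNge; apply: contra; exact: YY'n.
Qed.

Lemma cvg_prob0_maxe (Y1 Y2 : nat -> Om -> \bar R) :
  cvg_prob0 P Y1 -> cvg_prob0 P Y2 -> cvg_prob0 P (fun n w => maxe (Y1 n w) (Y2 n w)).
Proof.
move=> Y10 Y20 eps eps0 eta eta0; have eta2 : (0 < eta / 2)%R by lra.
apply: filterS2 (Y10 eps eps0 _ eta2) (Y20 eps eps0 _ eta2).
move=> n Y1n Y2n; rewrite [eta]splitr; apply: (le_lt_trans _ (outerP_setU_lt Y1n Y2n)).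
by apply: le_outerP => w /=; rewrite lt_max => /orP[]; [left | right].
Qed.

Lemma cvg_prob0_bounded_mul (Y W : nat -> Om -> \bar R) :
  bounded_in_prob P Y -> cvg_prob0 P W -> (forall n w, 0 <= W n w) ->
  cvg_prob0 P (fun n w => `|Y n w| * W n w).
Proof.
move=> YO W0 W_ge0 eps eps0 eta eta0; have eta2 : (0 < eta / 2)%R by lra.
have [M YM] := YO _ eta2.
pose M' := Num.max M 1%R; have M'0 : (0 < M')%R by rewrite lt_max ltr01 orbT.
have epsM'0 : (0 < eps / M')%R by rewrite divr_gt0.
apply: filterS2 YM (W0 _ epsM'0 _ eta2) => n YMn WMn.
rewrite [eta]splitr; apply: (le_lt_trans _ (outerP_setU_lt YMn WMn)).
apply: le_outerP => w /=.
have [YMw|] := leP `|Y n w| M%:E; last by left.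
have [WMw|] := leP (W n w) (eps / M')%:E; last by right.
rewrite ltNge => /negP le_eps; exfalso; apply: le_eps.
have -> : eps = (M' * (eps / M'))%R by rewrite mulrC divfK ?gt_eqF.
rewrite EFinM lee_pmul //; apply: le_trans YMw _.
by rewrite lee_fin le_max lexx.
Qed.

End OuterProbability.

Lemma continuous_compact_bounded (R : realType) (X : topologicalType) (A : set X)
    (h : X -> R) :
  compact A -> {within A, continuous h} -> exists B, forall t, A t -> `|h t| <= B.
Proof.
move=> cA ch; have [M [_ HM]] := compact_bounded (continuous_compact ch cA).
by exists (M + 1) => t At; apply: (HM (M + 1)); [rewrite ltrDl | exists t].
Qed.

Lemma continuous_within_ball (R : realType) (X : pseudoMetricType R) (A : set X)
    (h : X -> R) :
  {within A, continuous h} -> forall t e, A t -> 0 < e ->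
  exists2 r, 0 < r & forall u, A u -> ball t r u -> `|h t - h u| < e.
Proof.
move=> ch t e At e0.
have /cvgrPdist_lt/(_ e e0)/nbhs_ballP[r r0 Hr] := (subspace_continuousP A h).1 ch t At.
by exists r => // u Au tu; exact: Hr.
Qed.

Section EuclideanDistance.
Variables (R : realType) (a b : nat).
Implicit Types t u : 'rV[R]_a * 'rV[R]_b.

Lemma eucl_distxx t : eucl_dist t t = 0.
Proof.
by rewrite /eucl_dist !big1 ?addr0 ?sqrtr0 // => i _; rewrite subrr expr0n.
Qed.

Lemma eucl_dist_ball_lt eps : 0 < eps ->
  exists2 r, 0 < r & forall t u, ball t r u -> eucl_dist u t < eps.
Proof.
move=> eps0; pose N : R := (a + b)%:R; have N0 : 0 <= N by rewrite ler0n.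
pose r := eps / (N + 1); have r0 : 0 < r by rewrite divr_gt0 // ltr_wpDl.
have eps_r : eps = (N + 1) * r by rewrite /r mulrC divfK // gt_eqF // ltr_wpDl.
exists r => // t u [[_ tu1] [_ tu2]].
have coord_sqr (x y : R) : ball x r y -> (y - x) ^+ 2 <= r ^+ 2.
  by rewrite /ball /= ltr_norml => /andP[? ?]; nra.
have S1 : \sum_(i < a) (u.1 ord0 i - t.1 ord0 i) ^+ 2 <= a%:R * r ^+ 2.
  rewrite mulr_natl -[X in _ *+ X]card_ord -sumr_const.
  by apply: ler_sum => i _; apply: coord_sqr; apply: tu1.
have S2 : \sum_(j < b) (u.2 ord0 j - t.2 ord0 j) ^+ 2 <= b%:R * r ^+ 2.
  rewrite mulr_natl -[X in _ *+ X]card_ord -sumr_const.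
  by apply: ler_sum => j _; apply: coord_sqr; apply: tu2.
have Nr : N * r ^+ 2 < eps ^+ 2.
  by clearbody r; rewrite eps_r exprMn ltr_pM2r ?exprn_gt0 //; nra.
rewrite /eucl_dist -(ger0_norm (ltW eps0)) -sqrtr_sqr ltr_sqrt ?exprn_gt0 //.
by move: Nr; rewrite /N natrD; lra.
Qed.

End EuclideanDistance.

Section SetDistance.
Variables (R : realType) (a b : nat).
Implicit Types (t u : 'rV[R]_a * 'rV[R]_b) (A B : set ('rV[R]_a * 'rV[R]_b)).

Lemma dist_set_le t u B : B u -> (dist_set t B <= (eucl_dist t u)%:E)%E.
Proof. by move=> Bu; apply: ereal_inf_lbound; exists u. Qed.

Lemma excess_le0 A B : A `<=` B -> (excess A B <= 0)%E.
Proof.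
move=> AB; apply: ge_ereal_sup => _ [t At <-].
by apply: le_trans (dist_set_le t (AB t At)) _; rewrite eucl_distxx.
Qed.

End SetDistance.

Section Minimax.
Variables (R : realType) (dg dd : nat) (Gamma : set 'rV[R]_dg) (Delta : set 'rV[R]_dd).
Local Notation param := ('rV[R]_dg * 'rV[R]_dd)%type.
Local Notation T := (Gamma `*` Delta).
Hypothesis T_neq0 : T !=set0.
Implicit Types (h : param -> R) (t : param).

Let Gamma_neq0 : Gamma !=set0. Proof. by case: T_neq0 => -[g dl] [Gg _]; exists g. Qed.
Let Delta_neq0 : Delta !=set0. Proof. by case: T_neq0 => -[g dl] [_ Ddl]; exists dl. Qed.

Definition phir h g := sup [set h (g, dl) | dl in Delta].
Definition Vr h := inf [set phir h g | g in Gamma].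
Definition Qr h t := Num.max (phir h t.1 - h t) (phir h t.1 - Vr h).

Definition bounded_by h B := forall t, T t -> `|h t| <= B.

Lemma phir_le h g M : (forall dl, Delta dl -> h (g, dl) <= M) -> phir h g <= M.
Proof.
move=> hM; apply: ge_sup => [|_ [dl Ddl <-]]; last exact: hM.
by have [dl Ddl] := Delta_neq0; exists (h (g, dl)), dl.
Qed.

Lemma Vr_ge h M : (forall g, Gamma g -> M <= phir h g) -> M <= Vr h.
Proof.
move=> hM; apply: lb_le_inf => [|_ [g Gg <-]]; last exact: hM.
by have [g Gg] := Gamma_neq0; exists (phir h g), g.
Qed.

Section BoundedObjective.
Variables (h : param -> R) (B : R).
Hypothesis hB : bounded_by h B.

Let has_sup_section g : Gamma g -> has_sup [set h (g, dl) | dl in Delta].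
Proof.
move=> Gg; split; first by have [dl Ddl] := Delta_neq0; exists (h (g, dl)), dl.
by exists B => _ [dl Ddl <-]; exact: le_trans (ler_norm _) (@hB (g, dl) (conj Gg Ddl)).
Qed.

Lemma phir_ub g dl : Gamma g -> Delta dl -> h (g, dl) <= phir h g.
Proof. by move=> Gg Ddl; apply: sup_upper_bound (has_sup_section Gg) _ _; exists dl. Qed.

Lemma phir_adherent g e : Gamma g -> 0 < e ->
  exists2 dl, Delta dl & phir h g - e < h (g, dl).
Proof.
by move=> Gg e0; have [_ [dl Ddl <-]] := sup_adherent e0 (has_sup_section Gg); exists dl.
Qed.

Lemma phir_lb g : Gamma g -> - B <= phir h g.
Proof.
move=> Gg; have [dl Ddl] := Delta_neq0; apply: le_trans (phir_ub Gg Ddl).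
by have := @hB (g, dl) (conj Gg Ddl); rewrite ler_norml => /andP[].
Qed.

Lemma phi0E g : Gamma g -> phi0 h Delta g = (phir h g)%:E.
Proof.
move=> Gg; have [? ?] := has_sup_section Gg.
by rewrite /phi0 /phir -ereal_sup_EFin // image_comp.
Qed.

Lemma Vr_lb g : Gamma g -> Vr h <= phir h g.
Proof.
move=> Gg; apply: ge_inf; last by exists g.
by exists (- B) => _ [g' Gg' <-]; exact: phir_lb.
Qed.

Lemma V0E : V0 h Gamma Delta = (Vr h)%:E.
Proof.
rewrite /V0 (eq_imagel (f' := EFin \o phir h)) => [|g Gg]; last exact: phi0E.
rewrite -image_comp ereal_inf_EFin //; last first.
  by have [g Gg] := Gamma_neq0; exists (phir h g), g.
by exists (- B) => _ [g Gg <-]; exact: phir_lb.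
Qed.

End BoundedObjective.

Lemma phir_le_shift h1 h2 B1 eta g : bounded_by h1 B1 -> Gamma g ->
  (forall t, T t -> h2 t <= h1 t + eta) -> phir h2 g <= phir h1 g + eta.
Proof.
move=> h1B Gg h21; apply: phir_le => dl Ddl.
by apply: le_trans (h21 (g, dl) (conj Gg Ddl)) _; rewrite lerD2r (phir_ub h1B).
Qed.

Lemma Vr_le_shift h1 h2 B1 B2 eta : bounded_by h1 B1 -> bounded_by h2 B2 ->
  (forall t, T t -> h2 t <= h1 t + eta) -> Vr h2 <= Vr h1 + eta.
Proof.
move=> h1B h2B h21; rewrite -lerBlDr; apply: Vr_ge => g Gg.
by rewrite lerBlDr; apply: le_trans (Vr_lb h2B Gg) (phir_le_shift h1B Gg h21).
Qed.

Section Lipschitz.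
Variables (h1 h2 : param -> R) (B1 B2 eta : R).
Hypotheses (h1B : bounded_by h1 B1) (h2B : bounded_by h2 B2).
Hypothesis h12 : forall t, T t -> `|h1 t - h2 t| <= eta.

Let h21 t : T t -> h2 t <= h1 t + eta.
Proof. by move=> Tt; have := h12 Tt; rewrite ler_norml => /andP[]; lra. Qed.

Let h12' t : T t -> h1 t <= h2 t + eta.
Proof. by move=> Tt; have := h12 Tt; rewrite ler_norml => /andP[]; lra. Qed.

Lemma Vr_lipschitz : `|Vr h1 - Vr h2| <= eta.
Proof.
have := Vr_le_shift h2B h1B h12'; have := Vr_le_shift h1B h2B h21.
by rewrite ler_norml => ? ?; apply/andP; split; lra.
Qed.

Lemma Qr_le_shift t : T t -> Qr h2 t <= Qr h1 t + 2 * eta.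
Proof.
move=> Tt; have := phir_le_shift h1B (proj1 Tt) h21; have := Vr_le_shift h2B h1B h12'.
have := h12' Tt; rewrite /Qr ge_max -!lerBlDr !le_max => ? ? ?.
by apply/andP; split; apply/orP; [left | right]; lra.
Qed.

End Lipschitz.

Variable f : param -> R.

Definition unif_gap h := ereal_sup [set (`|h t - f t|)%:E | t in T].

Lemma unif_gap_le h eta : (unif_gap h <= eta%:E)%E -> forall t, T t -> `|h t - f t| <= eta.
Proof.
by move=> h_eta t Tt; rewrite -lee_fin; apply: le_trans h_eta; apply: ereal_sup_ubound; exists t.
Qed.

Lemma bounded_by_gap h B eta : bounded_by f B -> (unif_gap h <= eta%:E)%E ->
  bounded_by h (B + eta).
Proof.
move=> fB /unif_gap_le hf t Tt; have := fB t Tt; have := hf t Tt.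
by rewrite !ler_norml => /andP[? ?] /andP[? ?]; apply/andP; split; lra.
Qed.

Lemma Theta0_Qr B t : bounded_by f B -> T t -> Theta0 f Gamma Delta t <-> Qr f t <= 0.
Proof.
case: t => g dl fB [Gg Ddl] /=; rewrite /Theta0 /= (phi0E fB Gg) (V0E fB).
have := phir_ub fB Gg Ddl; have := Vr_lb fB Gg.
rewrite /Qr /= ge_max !subr_le0; split => [[_ [[->] [->]]]|/andP[? ?]]; first by rewrite !lexx.
by split => //; split; congr EFin; apply/eqP; rewrite eq_le; apply/andP.
Qed.

Definition Qbar h t :=
  maxe (phi0 h Delta t.1 - (h t)%:E)%E (phi0 h Delta t.1 - V0 h Gamma Delta)%E.

Lemma QbarE h B t : bounded_by h B -> T t -> Qbar h t = (Qr h t)%:E.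
Proof. by move=> hB [Gg _]; rewrite /Qbar (phi0E hB Gg) (V0E hB) EFin_max. Qed.

(* [Thetahat F X Z Gamma Delta tau n w] is [approx_set (fhat F X Z n w) (tau n w)]. *)
Definition approx_set h tau := [set t | T t /\ (Qbar h t <= tau%:E)%E].

Hypotheses (T_compact : compact T) (f_cont : {within T, continuous f}).

Let f_bounded : exists B, bounded_by f B.
Proof. exact: continuous_compact_bounded. Qed.

Lemma phir_lsc g e : Gamma g -> 0 < e ->
  exists2 r, 0 < r & forall g', Gamma g' -> ball g r g' -> phir f g - e < phir f g'.
Proof.
move=> Gg e0; have [B fB] := f_bounded; have e2 : 0 < e / 2 by lra.
have [dl Ddl fdl] := phir_adherent fB Gg e2.
have [r r0 Hr] := continuous_within_ball f_cont (conj Gg Ddl : T (g, dl)) e2.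
exists r => // g' Gg' gg'.
have := Hr (g', dl) (conj Gg' Ddl) (conj gg' (ballxx _ r0)).
by have := phir_ub fB Gg' Ddl; rewrite ltr_norml => ? /andP[? ?]; lra.
Qed.

Lemma Qr_lsc t e : T t -> 0 < e ->
  exists2 r, 0 < r & forall u, T u -> ball t r u -> Qr f t - e < Qr f u.
Proof.
case: t => g dl [Gg Ddl] e0; have e2 : 0 < e / 2 by lra.
have [r1 r10 H1] := phir_lsc Gg e2.
have [r2 r20 H2] := continuous_within_ball f_cont (conj Gg Ddl : T (g, dl)) e2.
exists (Num.min r1 r2); first by rewrite lt_min r10 r20.
move=> [g' dl'] [Gg' Ddl'] [/= gg' dldl'].
have r_r1 : Num.min r1 r2 <= r1 by rewrite ge_min lexx.
have r_r2 : Num.min r1 r2 <= r2 by rewrite ge_min lexx orbT.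
have := H1 g' Gg' (le_ball r_r1 gg').
have := H2 (g', dl') (conj Gg' Ddl') (conj (le_ball r_r2 gg') (le_ball r_r2 dldl')).
rewrite ltr_norml /Qr /= => /andP[? ?] ?.
rewrite ltrBlDr gt_max -!ltrBlDr !lt_max.
by apply/andP; split; apply/orP; [left | right]; lra.
Qed.

Lemma dist_Theta0_lt eps : 0 < eps -> exists2 del, 0 < del &
  forall t, T t -> Qr f t < del -> (dist_set t (Theta0 f Gamma Delta) < eps%:E)%E.
Proof.
move=> eps0; have [B fB] := f_bounded; have [r0 r0_gt0 Hr0] := eucl_dist_ball_lt dg dd eps0.
pose good del t := Qr f t < del -> (dist_set t (Theta0 f Gamma Delta) < eps%:E)%E.
have T_cover := (near_covering_withinP T).2 ((compact_near_coveringP T).1 T_compact).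
have : \forall del \near 0^'+, T `<=` good del.
  apply: (T_cover R 0^'+ good) => t Tt.
  have [Qt_le0|Qt_gt0] := leP (Qr f t) 0.
    exists (ball t r0, setT); first by split; [exact: nbhsx_ballx | exact: filterT].
    move=> [u del] /= [tu _] Tu _; apply: le_lt_trans (dist_set_le u _) _.
      by apply/(Theta0_Qr fB Tt).
    by rewrite lte_fin; apply: Hr0.
  have [r r_gt0 Hr] := Qr_lsc Tt (divr_gt0 Qt_gt0 (ltr0n _ 2)).
  exists (ball t r, [set del | del < Qr f t / 2]).
    by split; [exact: nbhsx_ballx | apply: nbhs_right_lt; lra].
  by move=> [u del] /= [tu del_lt] Tu Qu; have := Hr u Tu tu => Qtu; exfalso; lra.
move=> good_near; have [del [del0 Hdel]] := filter_ex (filterI (nbhs_right_gt 0) good_near).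
by exists del.
Qed.

Lemma V0_gap h eta : (unif_gap h <= eta%:E)%E ->
  (`|V0 h Gamma Delta - V0 f Gamma Delta| <= eta%:E)%E.
Proof.
move=> h_eta; have [B fB] := f_bounded; have hB := bounded_by_gap fB h_eta.
rewrite (V0E hB) (V0E fB) -EFinB lee_fin.
exact: Vr_lipschitz hB fB (unif_gap_le h_eta).
Qed.

Lemma excess_approx_set_Theta0 eps : 0 < eps -> exists2 del, 0 < del &
  forall h eta tau, (unif_gap h <= eta%:E)%E -> tau + 2 * eta < del ->
  (excess (approx_set h tau) (Theta0 f Gamma Delta) <= eps%:E)%E.
Proof.
move=> eps0; have [B fB] := f_bounded; have [del del0 Hdel] := dist_Theta0_lt eps0.
exists del => // h eta tau h_eta tau_del.
have hB := bounded_by_gap fB h_eta.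
apply: ge_ereal_sup => _ [t [Tt Qt] <-]; apply/ltW/Hdel => //.
move: Qt; rewrite (QbarE hB Tt) lee_fin => Qt.
by have := Qr_le_shift hB fB (unif_gap_le h_eta) Tt; lra.
Qed.

Lemma Theta0_sub_approx_set h eta tau : (unif_gap h <= eta%:E)%E -> 2 * eta <= tau ->
  Theta0 f Gamma Delta `<=` approx_set h tau.
Proof.
move=> h_eta eta_tau t Theta0t; have [B fB] := f_bounded.
have hB := bounded_by_gap fB h_eta; have Tt := Theta0t.1.
have fh u : T u -> `|f u - h u| <= eta by move=> Tu; rewrite distrC; apply: unif_gap_le.
split => //; rewrite (QbarE hB Tt) lee_fin.
have := (Theta0_Qr fB Tt).1 Theta0t; have := Qr_le_shift fB hB fh Tt; lra.
Qed.

End Minimax.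

Lemma le_of_scaled_ratio (R : realType) (q tau c : R) (s : \bar R) : 0 < q -> 0 < tau ->
  (`|q%:E * s| * `|(q^-1 / tau)%:E| <= c%:E)%E -> (s <= (c * tau)%:E)%E.
Proof.
move=> q0 tau0; have k0 : 0 < q^-1 / tau by rewrite divr_gt0 ?invr_gt0.
rewrite abse_EFin (gtr0_norm k0); case: s => [r| |] /=.
- rewrite -EFinM !lee_fin normrM (gtr0_norm q0).
  have -> : q * `|r| * (q^-1 / tau) = `|r| / tau by field; rewrite !gt_eqF.
  by rewrite ler_pdivrMr // => /(le_trans (ler_norm r)).
- by rewrite mulry gtr0_sg // mul1e /= mulyr gtr0_sg // mul1e leye_eq.
- by rewrite leNye.
Qed.

Section Consistency.
Variables (R : realType) (d : measure_display) (Om : measurableType d).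
Variable P : probability Om R.
Variables (dg dd : nat) (Gamma : set 'rV[R]_dg) (Delta : set 'rV[R]_dd).
Local Notation T := (Gamma `*` Delta).
Variables (f : 'rV[R]_dg * 'rV[R]_dd -> R) (fh : nat -> Om -> 'rV[R]_dg * 'rV[R]_dd -> R).
Hypotheses (T_neq0 : T !=set0) (T_compact : compact T) (f_cont : {within T, continuous f}).
Hypothesis gap0 : cvg_prob0 P (fun n w => unif_gap Gamma Delta f (fh n w)).

Lemma V0_cvg_prob :
  cvg_prob0 P (fun n w => `|V0 (fh n w) Gamma Delta - V0 f Gamma Delta|%E).
Proof.
apply: cvg_prob0_dominated gap0 => eps eps0; exists eps => //.
by apply: filterE => n w; exact: V0_gap.
Qed.

Lemma excess_approx_set_cvg_prob (tau : nat -> Om -> R) :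
  cvg_prob0 P (fun n w => `|(tau n w)%:E|%E) ->
  cvg_prob0 P (fun n w =>
    excess (approx_set Gamma Delta (fh n w) (tau n w)) (Theta0 f Gamma Delta)).
Proof.
move=> tau0; apply: cvg_prob0_dominated (cvg_prob0_maxe gap0 tau0) => eps eps0.
have [del del0 Hdel] := excess_approx_set_Theta0 T_neq0 T_compact f_cont eps0.
exists (del / 4); first by rewrite divr_gt0.
apply: filterE => n w; rewrite ge_max abse_EFin !lee_fin ler_norml.
by move=> /andP[gap /andP[_ tau_le]]; apply: Hdel gap _; lra.
Qed.

Lemma excess_Theta0_cvg_prob (tau : nat -> Om -> R) :
  bounded_in_prob P (fun n w => ((Num.sqrt n%:R)%:E * unif_gap Gamma Delta f (fh n w))%E) ->
  (forall n w, 0 < tau n w) ->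
  cvg_prob0 P (fun n w => `|((Num.sqrt n%:R)^-1 / tau n w)%:E|%E) ->
  cvg_prob0 P (fun n w =>
    excess (Theta0 f Gamma Delta) (approx_set Gamma Delta (fh n w) (tau n w))).
Proof.
move=> gapO tau_gt0 rate0.
apply: cvg_prob0_dominated (cvg_prob0_bounded_mul gapO rate0 _) => [eps eps0|n w];
  last exact: abse_ge0.
exists 2^-1; first by rewrite invr_gt0.
apply: filterS (nbhs_infty_gt 0) => n n_gt0 w.
move/le_of_scaled_ratio => /(_ _ (tau_gt0 n w)) gap.
apply: le_trans (excess_le0 (Theta0_sub_approx_set T_neq0 T_compact f_cont (gap _) _)) _.
- by rewrite sqrtr_gt0 ltr0n.
- lra.
- by rewrite lee_fin ltW.
Qed.

End Consistency.

Theorem theorem1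
  (R : realType) (d : measure_display) (Om : measurableType d)
  (P : probability Om R)
  (dX dZ dg dd : nat)
  (Xset : set 'rV[R]_dX) (Zset : set 'rV[R]_dZ)
  (Gamma : set 'rV[R]_dg) (Delta : set 'rV[R]_dd)
  (X : Om -> 'rV[R]_dX) (Z : Om -> 'rV[R]_dZ)
  (Xs : nat -> Om -> 'rV[R]_dX) (Zs : nat -> Om -> 'rV[R]_dZ)
  (G : 'rV[R]_dZ -> 'rV[R]_dg -> 'rV[R]_dX)
  (D : 'rV[R]_dX -> 'rV[R]_dd -> R)
  (f : 'rV[R]_dg * 'rV[R]_dd -> R)
  (* Theta = Gamma x Delta compact and non-empty *)
  (HTc : compact (Gamma `*` Delta)) (HTn : (Gamma `*` Delta) !=set0)
  (* X, Z random vectors with values in Xset, Zset *)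
  (HXrv : random_vector X) (HZrv : random_vector Z)
  (HXv : forall w, Xset (X w)) (HZv : forall w, Zset (Z w))
  (* X_i, Z_i: random vectors, identically distributed as X, resp. Z,
     and mutually independent *)
  (HXsrv : forall i, random_vector (Xs i)) (HZsrv : forall i, random_vector (Zs i))
  (HXsv : forall i w, Xset (Xs i w)) (HZsv : forall i w, Zset (Zs i w))
  (HXlaw : forall i, same_law P (Xs i) X) (HZlaw : forall i, same_law P (Zs i) Z)
  (Hind : mutually_independent P Xs Zs)
  (* G : Zset x Gamma -> Xset,  D : Xset x Delta -> (0,1) *)
  (HG : forall z g, Zset z -> Gamma g -> Xset (G z g))
  (HD : forall x dl, Xset x -> Delta dl -> 0 < D x dl < 1)
  (* F(X,Z,theta) measurable for every theta, a.s. continuous on Theta *)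
  (HFmeas : forall g dl, Gamma g -> Delta dl ->
     measurable_fun setT (fun w => Fgan G D (X w) (Z w) g dl))
  (HFcont : {ae P, forall w,
     {within Gamma `*` Delta,
        continuous (fun t : 'rV[R]_dg * 'rV[R]_dd => Fgan G D (X w) (Z w) t.1 t.2)}})
  (* f(theta) = E[F(X,Z,theta)] (finite) *)
  (Hf : forall g dl, Gamma g -> Delta dl ->
     (\int[P]_w (Fgan G D (X w) (Z w) g dl)%:E)%E = (f (g, dl))%:E) :
  (* (a) *)
  (forall tau : nat -> Om -> R,
     cvg_prob0 P (sup_dev (Fgan G D) Xs Zs f Gamma Delta) ->
     {within Gamma `*` Delta, continuous f} ->
     (forall n, measurable_fun setT (tau n)) ->
     (forall n w, 0 <= tau n w) ->
     cvg_prob0 P (fun n w => `|(tau n w)%:E|%E) ->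
     cvg_prob0 P (fun n w =>
        excess (Thetahat (Fgan G D) Xs Zs Gamma Delta tau n w) (Theta0 f Gamma Delta))
     /\ cvg_prob0 P (fun n w =>
        `|Vhat (Fgan G D) Xs Zs Gamma Delta n w - V0 f Gamma Delta|%E))
  /\
  (* (b) *)
  (forall tau : nat -> Om -> R,
     cvg_prob0 P (sup_dev (Fgan G D) Xs Zs f Gamma Delta) ->
     {within Gamma `*` Delta, continuous f} ->
     bounded_in_prob P (fun n w =>
        ((Num.sqrt n%:R)%:E * sup_dev (Fgan G D) Xs Zs f Gamma Delta n w)%E) ->
     (forall n, measurable_fun setT (tau n)) ->
     (forall n w, 0 < tau n w) ->
     cvg_prob0 P (fun n w => `|(tau n w)%:E|%E) ->
     cvg_prob0 P (fun n w => `|((Num.sqrt n%:R)^-1 / tau n w)%:E|%E) ->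
     cvg_prob0 P (fun n w =>
        excess (Theta0 f Gamma Delta) (Thetahat (Fgan G D) Xs Zs Gamma Delta tau n w))
     /\ cvg_prob0 P (fun n w =>
        hausdorff (Thetahat (Fgan G D) Xs Zs Gamma Delta tau n w) (Theta0 f Gamma Delta))).
Proof.
pose fh := fhat (Fgan G D) Xs Zs.
split=> [tau gap0 f_cont _ _ tau0 | tau gap0 f_cont gapO _ tau_gt0 tau0 rate0].
  split; first exact: (excess_approx_set_cvg_prob HTn HTc f_cont (fh := fh) gap0 tau0).
  exact: (V0_cvg_prob HTn HTc f_cont (fh := fh) gap0).
have excess_Theta0_hat := excess_Theta0_cvg_prob HTn HTc f_cont (fh := fh) gapO tau_gt0 rate0.
split=> //; apply: cvg_prob0_maxe excess_Theta0_hat.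
exact: (excess_approx_set_cvg_prob HTn HTc f_cont (fh := fh) gap0 tau0).
Qed.
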